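(* Let $f:X\to Y$ be a continuous surjection between compact Hausdorff spaces. Then the map $OH(f):OH(X)\to OH(Y)$ is open if and only if $f$ is open.
   Context: All spaces are compact Hausdorff and all maps continuous. For a compactum $X$, $C(X)$ is the Banach space of continuous real functions on $X$ with the sup-norm, and $c_X$ denotes the constant function with value $c\in\mathbb{R}$. Let $V(X)=\prod_{\varphi\in C(X)}[\min\varphi,\max\varphi]$ with the product topology (elements are functionals $\nu:C(X)\to\mathbb{R}$). A functional $\nu:C(X)\to\mathbb{R}$ is: normed if $\nu(1_X)=1$; weakly additive if $\nu(\varphi+c_X)=\nu(\varphi)+c$ for all $\varphi\in C(X)$, $c\in\mathbb{R}$; order-preserving if $\varphi\le\psi$ implies $\nu(\varphi)\le\nu(\psi)$; positively homogeneous if $\nu(t\varphi)=t\nu(\varphi)$ for all $t\ge 0$. $OH(X)\subset V(X)$ is the subspace of all functionals that are normed, weakly additive, order-preserving and positively homogeneous. For a map $f:X\to Y$, $OH(f):OH(X)\to OH(Y)$ is given by $OH(f)(\nu)(\varphi)=\nu(\varphi\circ f)$ for $\varphi\in C(Y)$. *)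

From Stdlib Require Import Reals Lra List.
Open Scope R_scope.
Set Implicit Arguments.

Record TopSpace := {
  carrier :> Type;
  opens : (carrier -> Prop) -> Prop;
  open_full : opens (fun _ => True);
  open_union : forall (I : Type) (F : I -> carrier -> Prop),
      (forall i, opens (F i)) -> opens (fun x => exists i, F i x);
  open_inter : forall A B : carrier -> Prop,
      opens A -> opens B -> opens (fun x => A x /\ B x)
}.

Definition compact_space (X : TopSpace) : Prop :=
  forall (I : Type) (F : I -> X -> Prop),
    (forall i, opens X (F i)) -> (forall x, exists i, F i x) ->
    exists l : list I, forall x, exists i, In i l /\ F i x.

Definition hausdorff_space (X : TopSpace) : Prop :=
  forall x y : X, x <> y ->
    exists U V : X -> Prop, opens X U /\ opens X V /\ U x /\ V y /\
      (forall z, ~ (U z /\ V z)).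

Definition continuous {X Y : TopSpace} (f : X -> Y) : Prop :=
  forall V, opens Y V -> opens X (fun x => V (f x)).

Definition image {A B : Type} (f : A -> B) (U : A -> Prop) : B -> Prop :=
  fun y => exists x, U x /\ f x = y.

Definition open_map {X Y : TopSpace} (f : X -> Y) : Prop :=
  forall U, opens X U -> opens Y (image f U).

Definition R_open (U : R -> Prop) : Prop :=
  forall x, U x -> exists e, 0 < e /\ forall y, Rabs (y - x) < e -> U y.

Definition continuousR {X : TopSpace} (phi : X -> R) : Prop :=
  forall U, R_open U -> opens X (fun x => U (phi x)).

Definition C (X : TopSpace) := { phi : X -> R | continuousR phi }.

Definition ev {X : TopSpace} (phi : C X) : X -> R := proj1_sig phi.

(* membership in V(X) = prod_phi [min phi, max phi]: nu(phi) lies in every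
   closed interval containing the range of phi (= [min phi, max phi] for
   compact_space nonempty X). *)
Definition in_V {X : TopSpace} (nu : C X -> R) : Prop :=
  forall phi : C X,
    (forall m, (forall x, m <= ev phi x) -> m <= nu phi) /\
    (forall M, (forall x, ev phi x <= M) -> nu phi <= M).

Definition normed {X : TopSpace} (nu : C X -> R) : Prop :=
  forall one : C X, (forall x, ev one x = 1) -> nu one = 1.

Definition weakly_additive {X : TopSpace} (nu : C X -> R) : Prop :=
  forall (phi psi : C X) (c : R), (forall x, ev psi x = ev phi x + c) ->
    nu psi = nu phi + c.

Definition order_preserving {X : TopSpace} (nu : C X -> R) : Prop :=
  forall phi psi : C X, (forall x, ev phi x <= ev psi x) -> nu phi <= nu psi.

Definition pos_homogeneous {X : TopSpace} (nu : C X -> R) : Prop :=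
  forall (phi psi : C X) (t : R), 0 <= t -> (forall x, ev psi x = t * ev phi x) ->
    nu psi = t * nu phi.

Definition isOH {X : TopSpace} (nu : C X -> R) : Prop :=
  in_V nu /\ normed nu /\ weakly_additive nu /\ order_preserving nu /\
  pos_homogeneous nu.

Definition OH (X : TopSpace) := { nu : C X -> R | isOH nu }.

(* Subspace topology on OH(X) induced by the product topology of V(X):
   U is open iff every point has a basic (finitely-many-coordinates)
   neighbourhood contained in U. *)
Definition OH_open {X : TopSpace} (U : OH X -> Prop) : Prop :=
  forall nu, U nu -> exists (l : list (C X)) (e : R), 0 < e /\
    forall mu : OH X,
      (forall phi, In phi l -> Rabs (proj1_sig mu phi - proj1_sig nu phi) < e) ->
      U mu.

Definition OH_open_map {X Y : TopSpace} (F : OH X -> OH Y) : Prop :=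
  forall U, OH_open U -> OH_open (image F U).

Lemma comp_cont {X Y : TopSpace} (f : X -> Y) (hf : continuous f) (psi : C Y) :
  continuousR (fun x => ev psi (f x)).
Proof.
  intros U hU. apply (hf (fun y => U (ev psi y))). exact (proj2_sig psi U hU).
Qed.

Definition compC {X Y : TopSpace} (f : X -> Y) (hf : continuous f) (psi : C Y) : C X :=
  exist _ (fun x => ev psi (f x)) (comp_cont hf psi).

Definition OHf_fun {X Y : TopSpace} (f : X -> Y) (hf : continuous f)
  (nu : C X -> R) : C Y -> R := fun psi => nu (compC hf psi).

Lemma OHf_isOH {X Y : TopSpace} (f : X -> Y) (hf : continuous f) (nu : C X -> R) :
  isOH nu -> isOH (OHf_fun hf nu).
Proof.
  intros [hV [hn [hw [ho hh]]]]; unfold OHf_fun; repeat split.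
  - intros m hm. apply (proj1 (hV _)). intros x. apply hm.
  - intros M hM. apply (proj2 (hV _)). intros x. apply hM.
  - intros one h1. apply hn. intros x. apply h1.
  - intros phi psi c h. apply hw. intros x. apply h.
  - intros phi psi h. apply ho. intros x. apply h.
  - intros phi psi t ht h. apply hh; [exact ht|]. intros x. apply h.
Qed.

Definition OHmap {X Y : TopSpace} (f : X -> Y) (hf : continuous f) :
  OH X -> OH Y :=
  fun nu => exist _ (OHf_fun hf (proj1_sig nu)) (OHf_isOH hf (proj2_sig nu)).

(* If OH(f) is open and x lies in an open set U, let phi be an Urysohn function equal
   to 1 at x and vanishing off U.  The functionals nu with nu(phi) > 1/2 form an open set,
   so its image under OH(f) contains the Dirac functionals at all points y' near f x.  A
   preimage nu of the Dirac functional at y' only sees phi on the fibre of y', hence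
   nu(phi) <= 1/4 unless y' lies in f {1/4 <= phi}, a subset of f(U).

   Conversely, for open f the fibrewise supremum and infimum of phi are continuous on Y.
   Given nu, and mu close to OH(f)(nu) on these lifts of finitely many phi, the functional
   phi |-> max (mu (inf phi)) (min (nu phi) (mu (sup phi))) lies in OH(X), is close to nu,
   and is mapped to mu by OH(f). *)

From Stdlib Require Import Reals Lra Lia List Classical FunctionalExtensionality
  PropExtensionality ProofIrrelevance IndefiniteDescription.
Open Scope R_scope.

Lemma opens_ext (X : TopSpace) (A B : X -> Prop) :
  (forall z, A z <-> B z) -> opens X A -> opens X B.
Proof.
  intros h hA. replace B with A; auto.
  apply functional_extensionality; intro z; apply propositional_extensionality; auto.
Qed.

Lemma open_bigcup (X : TopSpace) (A : Type) (P : A -> Prop) (G : A -> X -> Prop) :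
  (forall a, P a -> opens X (G a)) -> opens X (fun z => exists a, P a /\ G a z).
Proof.
  intros h.
  apply (opens_ext _ (fun z => exists i : {a | P a}, G (proj1_sig i) z)).
  - intros z; split.
    + intros [[a ha] hz]; exists a; auto.
    + intros [a [ha hz]]; exists (exist _ a ha); auto.
  - apply open_union. intros [a ha]; apply h; auto.
Qed.

Lemma open_empty (X : TopSpace) : opens X (fun _ => False).
Proof.
  apply (opens_ext _ (fun z => exists a : False, True /\ True)).
  - intros z; split; [intros [[] _] | intros []].
  - apply open_bigcup. intros [].
Qed.

Lemma open_guard (X : TopSpace) (P : Prop) (O : X -> Prop) :
  (P -> opens X O) -> opens X (fun z => P -> O z).
Proof.
  intros h. destruct (classic P) as [hP|hP].
  - apply (opens_ext _ O); [intros z; tauto | auto].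
  - apply (opens_ext _ (fun _ => True)); [intros z; tauto | apply open_full].
Qed.

Lemma open_guard_and (X : TopSpace) (P : Prop) (O : X -> Prop) :
  (P -> opens X O) -> opens X (fun z => P /\ O z).
Proof.
  intros h. destruct (classic P) as [hP|hP].
  - apply (opens_ext _ O); [intros z; tauto | auto].
  - apply (opens_ext _ (fun _ => False)); [intros z; tauto | apply open_empty].
Qed.

Lemma open_locally (X : TopSpace) (A : X -> Prop) :
  (forall z, A z -> exists O, opens X O /\ O z /\ forall w, O w -> A w) -> opens X A.
Proof.
  intros h.
  apply (opens_ext _ (fun z => exists O, (opens X O /\ forall w, O w -> A w) /\ O z)).
  - intros z; split.
    + intros [O [[_ hO] hz]]; auto.
    + intros hz; destruct (h z hz) as [O [hO [hOz hOA]]]; exists O; auto.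
  - apply open_bigcup; intros O [hO _]; exact hO.
Qed.

Lemma open_finite_inter (X : TopSpace) (A : Type) (l : list A) (G : A -> X -> Prop) :
  (forall a, In a l -> opens X (G a)) -> opens X (fun z => forall a, In a l -> G a z).
Proof.
  induction l as [|a l IH]; intros h.
  - apply (opens_ext _ (fun _ => True)); [|apply open_full].
    intros z; split; auto; intros _ a [].
  - apply (opens_ext _ (fun z => G a z /\ (forall b, In b l -> G b z))).
    + intros z; split.
      * intros [h1 h2] b [<-|hb]; auto.
      * intros H; split; [apply H; left; auto | intros b hb; apply H; right; auto].
    + apply open_inter; [apply h; left; auto | apply IH; intros b hb; apply h; right; auto].
Qed.

Definition closed (X : TopSpace) (F : X -> Prop) := opens X (fun z => ~ F z).

Lemma closed_complement (X : TopSpace) (O : X -> Prop) : opens X O -> closed X (fun z => ~ O z).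
Proof. apply opens_ext. intros z; split; [auto | apply NNPP]. Qed.

Definition closure (X : TopSpace) (A : X -> Prop) (z : X) : Prop :=
  forall O, opens X O -> O z -> exists w, O w /\ A w.

Lemma closure_closed (X : TopSpace) (A : X -> Prop) : closed X (closure X A).
Proof.
  apply open_locally. intros z hz.
  apply not_all_ex_not in hz as [O hO].
  apply imply_to_and in hO as [hO1 hO]. apply imply_to_and in hO as [hO2 hO].
  exists O; split; [exact hO1|]; split; [exact hO2|]. intros w hw hcl.
  destruct (hcl O hO1 hw) as [u [hu1 hu2]]. apply hO; exists u; auto.
Qed.

Lemma subset_closure (X : TopSpace) (A : X -> Prop) z : A z -> closure X A z.
Proof. intros h O _ hO; exists z; auto. Qed.

(** * Compact Hausdorff spaces *)

Lemma closed_compact (X : TopSpace) (hc : compact_space X) (F : X -> Prop) (hF : closed X F)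
  (G : X -> X -> Prop) (hG : forall p, F p -> opens X (G p) /\ G p p) :
  exists l : list X, forall z, F z -> exists p, In p l /\ F p /\ G p z.
Proof.
  set (H := fun (i : option X) z => match i with None => ~ F z | Some p => F p /\ G p z end).
  destruct (hc (option X) H) as [l hl]; subst H.
  - intros [p|]; simpl; [|exact hF]. apply open_guard_and. apply hG.
  - intros z. destruct (classic (F z)) as [hz|hz].
    + exists (Some z); simpl; split; auto; apply (hG z hz).
    + exists None; simpl; auto.
  - exists (flat_map (fun i => match i with None => nil | Some p => p :: nil end) l).
    intros z hz. destruct (hl z) as [[p|] [hi hpi]]; simpl in hpi; [|contradiction].
    exists p; split; [|exact hpi].
    apply in_flat_map. exists (Some p); simpl; auto.
Qed.

(* The map [g] lets one argument give both normality ([g] the identity) and closedness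
   of continuous maps ([g = f]). *)
Lemma compact_separation (X Z : TopSpace) (hc : compact_space X) (g : X -> Z)
  (F : X -> Prop) (E : Z -> Prop) (hF : closed X F)
  (hsep : forall p, F p -> exists (A : X -> Prop) (B : Z -> Prop), opens X A /\ opens Z B /\
     A p /\ (forall w, E w -> B w) /\ (forall z, A z -> B (g z) -> False)) :
  exists (V : X -> Prop) (W : Z -> Prop), opens X V /\ opens Z W /\
     (forall z, F z -> V z) /\ (forall w, E w -> W w) /\ (forall z, V z -> W (g z) -> False).
Proof.
  assert (hch : forall p, exists AB : (X -> Prop) * (Z -> Prop), F p ->
     opens X (fst AB) /\ opens Z (snd AB) /\ fst AB p /\
     (forall w, E w -> snd AB w) /\ (forall z, fst AB z -> snd AB (g z) -> False)).
  { intros p. destruct (classic (F p)) as [hp|hp].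
    - destruct (hsep p hp) as [A [B hAB]]. exists (A, B); auto.
    - exists ((fun _ => False), (fun _ => False)); intros; contradiction. }
  destruct (functional_choice _ hch) as [sel hsel].
  destruct (closed_compact X hc F hF (fun p => fst (sel p))) as [l hl].
  { intros p hp. destruct (hsel p hp) as [h1 [_ [h3 _]]]; auto. }
  exists (fun z => exists p, (In p l /\ F p) /\ fst (sel p) z),
         (fun w => forall p, In p l -> F p -> snd (sel p) w).
  split; [|split; [|split; [|split]]].
  - apply open_bigcup. intros p [_ hp]. apply (hsel p hp).
  - apply open_finite_inter. intros p _. apply open_guard. apply hsel.
  - intros z hz. destruct (hl z hz) as [p [h1 [h2 h3]]]. exists p; auto.
  - intros w hw p _ hp. apply (hsel p hp); auto.
  - intros z [p [[h1 h2] h3]] hw. apply (proj2 (proj2 (proj2 (proj2 (hsel p h2)))) z h3).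
    apply hw; auto.
Qed.

Lemma singleton_closed (X : TopSpace) (hh : hausdorff_space X) (x : X) :
  closed X (fun z => z = x).
Proof.
  apply open_locally. intros z hz.
  destruct (hh z x hz) as [U [V [hU [hV [hUz [hVx hd]]]]]].
  exists U; split; auto; split; auto. intros w hw <-. apply (hd w); auto.
Qed.

Lemma closed_separation (X : TopSpace) (hc : compact_space X) (hh : hausdorff_space X)
  (F D : X -> Prop) (hF : closed X F) (hD : closed X D) (hdis : forall z, F z -> D z -> False) :
  exists V W : X -> Prop, opens X V /\ opens X W /\ (forall z, F z -> V z) /\
     (forall z, D z -> W z) /\ (forall z, V z -> W z -> False).
Proof.
  apply (compact_separation X X hc (fun z => z) F D hF). intros p hp.
  destruct (compact_separation X X hc (fun z => z) D (fun z => z = p) hD)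
    as [W [V [hW [hV [hDW [hpV hd]]]]]].
  { intros q hq. assert (hqp : q <> p) by (intros ->; apply (hdis p); auto).
    destruct (hh q p hqp) as [A [B [hA [hB [hAq [hBp hAB]]]]]].
    exists A, B; repeat split; auto.
    - intros z ->; auto.
    - intros z h1 h2; apply (hAB z); auto. }
  exists V, W; repeat split; auto. intros z h1 h2; apply (hd z); auto.
Qed.

Lemma closed_shrink (X : TopSpace) (hc : compact_space X) (hh : hausdorff_space X)
  (F O : X -> Prop) (hF : closed X F) (hO : opens X O) (hFO : forall z, F z -> O z) :
  exists V, opens X V /\ (forall z, F z -> V z) /\ (forall z, closure X V z -> O z).
Proof.
  destruct (closed_separation X hc hh F (fun z => ~ O z) hF (closed_complement X O hO))
    as [V [W [hV [hW [hFV [hOW hd]]]]]].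
  { intros z h1 h2; apply h2; auto. }
  exists V; repeat split; auto. intros z hz. apply NNPP; intro hnz.
  destruct (hz W hW (hOW z hnz)) as [w [h1 h2]]. apply (hd w); auto.
Qed.

Lemma closed_image (X Y : TopSpace) (hc : compact_space X) (hYh : hausdorff_space Y)
  (f : X -> Y) (hf : continuous f) (K : X -> Prop) (hK : closed X K) :
  closed Y (image f K).
Proof.
  apply open_locally. intros y hy.
  destruct (compact_separation X Y hc f K (fun w => w = y) hK) as [V [W [_ [hW [hKV [hyW hd]]]]]].
  { intros p hp. assert (hpy : f p <> y) by (intro; apply hy; exists p; auto).
    destruct (hYh _ _ hpy) as [A [B [hA [hB [hAp [hBy hAB]]]]]].
    exists (fun z => A (f z)), B; repeat split; auto.
    - intros w ->; auto.
    - intros z h1 h2; apply (hAB (f z)); auto. }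
  exists W; repeat split; auto. intros w hw [z [hz <-]]. apply (hd z); auto.
Qed.

Lemma continuousR_of_semicontinuous (X : TopSpace) (g : X -> R) :
  (forall a, opens X (fun z => g z < a)) -> (forall a, opens X (fun z => a < g z)) ->
  continuousR g.
Proof.
  intros h1 h2 U hU. apply open_locally. intros z hz.
  destruct (hU _ hz) as [e [he hUe]].
  exists (fun w => g w < g z + e /\ g z - e < g w). split; [apply open_inter; auto|].
  split; [lra|]. intros w [hw1 hw2]. apply hUe. apply Rabs_def1; lra.
Qed.

Lemma open_lt (X : TopSpace) (phi : C X) a : opens X (fun z => ev phi z < a).
Proof.
  apply (proj2_sig phi (fun r => r < a)). intros r hr. exists (a - r). split; [lra|].
  intros s hs. apply Rabs_def2 in hs. lra.
Qed.

Lemma open_gt (X : TopSpace) (phi : C X) a : opens X (fun z => a < ev phi z).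
Proof.
  apply (proj2_sig phi (fun r => a < r)). intros r hr. exists (r - a). split; [lra|].
  intros s hs. apply Rabs_def2 in hs. lra.
Qed.

Lemma open_dist_lt (X : TopSpace) (phi : C X) c e : opens X (fun z => Rabs (ev phi z - c) < e).
Proof.
  apply (proj2_sig phi (fun r => Rabs (r - c) < e)).
  intros r hr. exists (e - Rabs (r - c)). split; [lra|].
  intros s hs. pose proof (Rabs_triang (s - r) (r - c)).
  replace (s - r + (r - c)) with (s - c) in H by ring. lra.
Qed.

Lemma closed_ge (X : TopSpace) (phi : C X) a : closed X (fun z => a <= ev phi z).
Proof.
  apply (opens_ext _ (fun z => ev phi z < a)); [|apply open_lt]. intros z; lra.
Qed.

Lemma affine_continuous (X : TopSpace) (phi : C X) (a b : R) :
  continuousR (fun z => a + b * ev phi z).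
Proof.
  intros U hU. apply (proj2_sig phi (fun r => U (a + b * r))).
  intros r hr. destruct (hU _ hr) as [e [he h]].
  pose proof (Rabs_pos b).
  exists (e / (Rabs b + 1)). split; [apply Rdiv_lt_0_compat; lra|].
  intros s hs. apply h.
  replace (a + b * s - (a + b * r)) with (b * (s - r)) by ring.
  rewrite Rabs_mult. pose proof (Rabs_pos (s - r)).
  apply (Rmult_lt_compat_r (Rabs b + 1)) in hs; [|lra].
  unfold Rdiv in hs. rewrite Rmult_assoc, Rinv_l in hs; nra.
Qed.

Definition aff (X : TopSpace) (a b : R) (phi : C X) : C X :=
  exist _ (fun z => a + b * ev phi z) (affine_continuous X phi a b).

Lemma bounded (X : TopSpace) (hc : compact_space X) (phi : C X) :
  exists M, forall z, Rabs (ev phi z) <= M.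
Proof.
  destruct (hc nat (fun n z => Rabs (ev phi z - 0) < INR n)) as [l hl].
  - intros n. apply open_dist_lt.
  - intros z. destruct (archimed (Rabs (ev phi z - 0))) as [h1 _].
    assert (hz0 : (0 <= up (Rabs (ev phi z - 0)))%Z)
      by (apply le_IZR; pose proof (Rabs_pos (ev phi z - 0)); lra).
    exists (Z.to_nat (up (Rabs (ev phi z - 0)))).
    rewrite INR_IZR_INZ, Znat.Z2Nat.id; auto.
  - exists (fold_right (fun n s => INR n + s) 0 l). intros z.
    destruct (hl z) as [n [hn hz]]. rewrite Rminus_0_r in hz.
    apply Rlt_le. eapply Rlt_le_trans; [exact hz|].
    clear hl hz. induction l as [|m l IH]; [destruct hn|].
    simpl. assert (0 <= fold_right (fun n s => INR n + s) 0 l).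
    { clear. induction l; simpl; [lra|]. pose proof (pos_INR a); lra. }
    destruct hn as [<-|hn]; [lra|]. pose proof (pos_INR m). specialize (IH hn). lra.
Qed.

(** * Urysohn's lemma *)

Lemma glb_ex (S : R -> Prop) (ne : exists r, S r) (lb : exists L, forall r, S r -> L <= r) :
  {g | (forall r, S r -> g <= r) /\ forall b, (forall r, S r -> b <= r) -> b <= g}.
Proof.
  destruct (completeness (fun r => S (- r))) as [m [hm1 hm2]].
  - destruct lb as [L hL]. exists (- L). intros r hr. specialize (hL _ hr). lra.
  - destruct ne as [r hr]. exists (- r). rewrite Ropp_involutive; auto.
  - exists (- m). split.
    + intros r hr. assert (- r <= m) by (apply hm1; rewrite Ropp_involutive; auto). lra.
    + intros b hb. assert (m <= - b); [|lra]. apply hm2. intros r hr. specialize (hb _ hr). lra.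
Qed.

Lemma INR_lt_pow2 n : INR n < 2 ^ n.
Proof.
  assert (INR n + 1 <= 2 ^ n); [|lra].
  induction n; [simpl; lra|]. rewrite S_INR; simpl. pose proof (pos_INR n). lra.
Qed.

Lemma INR_pow2 n : INR (2 ^ n) = 2 ^ n.
Proof. rewrite pow_INR. replace (INR 2) with 2 by (simpl; lra). auto. Qed.

Lemma dyadic_nonneg n k : 0 <= INR k / 2 ^ n.
Proof.
  unfold Rdiv. apply Rmult_le_pos; [apply pos_INR|].
  apply Rlt_le, Rinv_0_lt_compat, pow_lt; lra.
Qed.

Lemma dyadic_dense a b : 0 <= a -> a < b -> b <= 1 ->
  exists n k, (k <= 2 ^ n)%nat /\ a < INR k / 2 ^ n /\ INR k / 2 ^ n < b.
Proof.
  intros ha hab hb.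
  destruct (archimed (1 / (b - a))) as [hz1 _].
  assert (hpos : 0 < 1 / (b - a)) by (apply Rdiv_lt_0_compat; lra).
  assert (hz0 : (0 <= up (1 / (b - a)))%Z) by (apply le_IZR; lra).
  set (n := Z.to_nat (up (1 / (b - a)))).
  assert (hn : IZR (up (1 / (b - a))) = INR n)
    by (unfold n; rewrite INR_IZR_INZ, Znat.Z2Nat.id; auto).
  assert (hp : 0 < 2 ^ n) by (apply pow_lt; lra).
  assert (hba : 1 < (b - a) * 2 ^ n).
  { pose proof (INR_lt_pow2 n).
    apply (Rmult_lt_reg_l (/ (b - a))); [apply Rinv_0_lt_compat; lra|].
    rewrite <- Rmult_assoc, Rinv_l, Rmult_1_l, Rmult_1_r; [|lra]. unfold Rdiv in hz1. lra. }
  destruct (archimed (a * 2 ^ n)) as [hk1 hk2].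
  assert (hw0 : (0 <= up (a * 2 ^ n))%Z) by (apply le_IZR; nra).
  set (k := Z.to_nat (up (a * 2 ^ n))).
  assert (hk : IZR (up (a * 2 ^ n)) = INR k)
    by (unfold k; rewrite INR_IZR_INZ, Znat.Z2Nat.id; auto).
  exists n, k. split; [|split].
  - apply Nat.lt_le_incl, INR_lt. rewrite INR_pow2. nra.
  - apply (Rmult_lt_reg_r (2 ^ n)); auto. unfold Rdiv. rewrite Rmult_assoc, Rinv_l; lra.
  - apply (Rmult_lt_reg_r (2 ^ n)); auto. unfold Rdiv. rewrite Rmult_assoc, Rinv_l; lra.
Qed.

Lemma dyadic_lt_nat n k m j : INR k / 2 ^ n < INR j / 2 ^ m -> (k * 2 ^ m < j * 2 ^ n)%nat.
Proof.
  intros h. apply INR_lt. rewrite !mult_INR, !INR_pow2.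
  assert (0 < 2 ^ n) by (apply pow_lt; lra). assert (0 < 2 ^ m) by (apply pow_lt; lra).
  apply (Rmult_lt_compat_r (2 ^ n * 2 ^ m)) in h; [|nra].
  replace (INR k / 2 ^ n * (2 ^ n * 2 ^ m)) with (INR k * 2 ^ m) in h by (field; lra).
  replace (INR j / 2 ^ m * (2 ^ n * 2 ^ m)) with (INR j * 2 ^ n) in h by (field; lra).
  exact h.
Qed.

Section Urysohn.
Variables (X : TopSpace) (hc : compact_space X) (hh : hausdorff_space X).

Definition interpolates (A B V : X -> Prop) :=
  opens X V /\ (forall z, closure X A z -> V z) /\ (forall z, closure X V z -> B z).

Lemma interpolant_ex (A B : X -> Prop) :
  exists V, (opens X B /\ forall z, closure X A z -> B z) -> interpolates A B V.
Proof.
  destruct (classic (opens X B /\ forall z, closure X A z -> B z)) as [[hB hAB]|h].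
  - destruct (closed_shrink X hc hh (closure X A) B (closure_closed X A) hB hAB) as [V hV].
    exists V; auto.
  - exists A; intros; contradiction.
Qed.

Definition interpolant (A B : X -> Prop) : X -> Prop :=
  proj1_sig (constructive_indefinite_description _ (interpolant_ex A B)).

Lemma interpolant_spec (A B : X -> Prop) :
  opens X B -> (forall z, closure X A z -> B z) -> interpolates A B (interpolant A B).
Proof.
  intros hB hAB. unfold interpolant.
  destruct (constructive_indefinite_description _ _) as [V hV]; simpl. auto.
Qed.

(* [refine g] doubles the resolution: even indices keep the sets of [g],
   odd indices insert an interpolant between two consecutive ones. *)
Definition refine (g : nat -> X -> Prop) (j : nat) : X -> Prop :=
  if Nat.even j then g (Nat.div2 j) else interpolant (g (Nat.div2 j)) (g (S (Nat.div2 j))).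

Lemma refine_even g k : refine g (2 * k) = g k.
Proof. unfold refine. rewrite Nat.even_mul, Nat.div2_double. reflexivity. Qed.

Lemma refine_odd g k : refine g (S (2 * k)) = interpolant (g k) (g (S k)).
Proof. unfold refine. rewrite Nat.even_succ, Nat.odd_mul, Nat.div2_succ_double. reflexivity. Qed.

Definition nested (g : nat -> X -> Prop) (n : nat) :=
  (forall k, (k <= 2 ^ n)%nat -> opens X (g k)) /\
  (forall k, (k < 2 ^ n)%nat -> forall z, closure X (g k) z -> g (S k) z).

Lemma nested_refine g n : nested g n -> nested (refine g) (S n).
Proof.
  intros [hop hcl]. unfold nested. rewrite Nat.pow_succ_r'.
  split; intros j hj; destruct (Nat.Even_or_Odd j) as [[k ->]|[k ->]];
    rewrite ?Nat.add_1_r in *.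
  - rewrite refine_even. apply hop. lia.
  - rewrite refine_odd. apply interpolant_spec; [apply hop | apply hcl]; lia.
  - rewrite refine_odd, refine_even.
    apply interpolant_spec; [apply hop | apply hcl]; lia.
  - replace (S (S (2 * k))) with (2 * S k)%nat by lia. rewrite refine_odd, refine_even.
    apply interpolant_spec; [apply hop | apply hcl]; lia.
Qed.

Lemma nested_closure_sub g n : nested g n ->
  forall a b, (a < b)%nat -> (b <= 2 ^ n)%nat -> forall z, closure X (g a) z -> g b z.
Proof.
  intros [_ hcl] a b hab. induction hab as [|b hab IH]; intros hb z hz.
  - apply hcl; auto; lia.
  - apply hcl; [lia|]. apply subset_closure. apply IH; auto; lia.
Qed.

Variables (U0 O1 : X -> Prop).
Hypotheses (hU0 : opens X U0) (hO1 : opens X O1) (hU0O1 : forall z, closure X U0 z -> O1 z).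

(* [dyadic_sets n k] is the set attached to the dyadic rational k / 2^n. *)
Fixpoint dyadic_sets (n : nat) : nat -> X -> Prop :=
  match n with
  | O => fun k => match k with O => U0 | _ => O1 end
  | S n => refine (dyadic_sets n)
  end.

Lemma nested_dyadic_sets n : nested (dyadic_sets n) n.
Proof.
  induction n as [|n IH]; [|apply nested_refine; auto].
  split; simpl.
  - intros [|[|k]] hk; auto; lia.
  - intros [|k] hk; [auto | lia].
Qed.

Lemma dyadic_sets_rescale n m k : dyadic_sets (n + m) (k * 2 ^ m) = dyadic_sets n k.
Proof.
  induction m as [|m IH].
  - rewrite Nat.add_0_r, Nat.pow_0_r, Nat.mul_1_r. auto.
  - rewrite Nat.add_succ_r. change (dyadic_sets (S (n + m))) with (refine (dyadic_sets (n + m))).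
    replace (k * 2 ^ S m)%nat with (2 * (k * 2 ^ m))%nat by (rewrite Nat.pow_succ_r'; lia).
    rewrite refine_even. auto.
Qed.

Lemma dyadic_sets_closure_sub n k m j :
  (j <= 2 ^ m)%nat -> INR k / 2 ^ n < INR j / 2 ^ m ->
  forall z, closure X (dyadic_sets n k) z -> dyadic_sets m j z.
Proof.
  intros hj hlt z hz.
  rewrite <- (dyadic_sets_rescale n m) in hz.
  rewrite <- (dyadic_sets_rescale m n), Nat.add_comm.
  apply (nested_closure_sub _ _ (nested_dyadic_sets (n + m)) (k * 2 ^ m)); auto.
  - apply dyadic_lt_nat; auto.
  - rewrite Nat.pow_add_r, Nat.mul_comm. apply Nat.mul_le_mono_l. auto.
Qed.

Lemma dyadic_sets_open n k : (k <= 2 ^ n)%nat -> opens X (dyadic_sets n k).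
Proof. apply nested_dyadic_sets. Qed.

Lemma dyadic_sets_top n z : dyadic_sets n (2 ^ n) z -> O1 z.
Proof.
  intros h. rewrite <- (Nat.mul_1_l (2 ^ n)) in h.
  change n with (0 + n)%nat in h at 1. rewrite dyadic_sets_rescale in h. exact h.
Qed.

Definition levels (z : X) (r : R) : Prop :=
  r = 1 \/ exists n k, (k <= 2 ^ n)%nat /\ r = INR k / 2 ^ n /\ dyadic_sets n k z.

Lemma levels_nonneg z r : levels z r -> 0 <= r.
Proof. intros [->|[n [k [_ [-> _]]]]]; [lra | apply dyadic_nonneg]. Qed.

Definition urysohn_fun (z : X) : R :=
  proj1_sig (glb_ex (levels z) (ex_intro _ 1 (or_introl eq_refl))
                    (ex_intro _ 0 (levels_nonneg z))).

Lemma urysohn_fun_le z r : levels z r -> urysohn_fun z <= r.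
Proof. unfold urysohn_fun. destruct (glb_ex _ _ _) as [g hg]. apply hg. Qed.

Lemma le_urysohn_fun z b : (forall r, levels z r -> b <= r) -> b <= urysohn_fun z.
Proof. unfold urysohn_fun. destruct (glb_ex _ _ _) as [g hg]. apply hg. Qed.

Lemma urysohn_fun_range z : 0 <= urysohn_fun z <= 1.
Proof.
  split; [apply le_urysohn_fun, levels_nonneg | apply urysohn_fun_le; left; auto].
Qed.

Lemma urysohn_fun_usc a : opens X (fun z => urysohn_fun z < a).
Proof.
  apply open_locally. intros z hz.
  destruct (classic (exists r, levels z r /\ r < a)) as [[r [[->|[n [k [hk [-> hU]]]]] hra]]|hn].
  - exists (fun _ => True). split; [apply open_full|]. split; auto.
    intros w _. pose proof (urysohn_fun_range w). lra.
  - exists (dyadic_sets n k). split; [apply dyadic_sets_open; auto|]. split; auto.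
    intros w hw. assert (urysohn_fun w <= INR k / 2 ^ n); [|lra].
    apply urysohn_fun_le. right. exists n, k; auto.
  - exfalso. assert (a <= urysohn_fun z); [|lra].
    apply le_urysohn_fun. intros r hr. apply Rnot_lt_le. intro; apply hn; eauto.
Qed.

Lemma urysohn_fun_lsc a : opens X (fun z => a < urysohn_fun z).
Proof.
  apply open_locally. intros z hz.
  destruct (Rlt_dec a 0) as [ha|ha].
  { exists (fun _ => True). split; [apply open_full|]. split; auto.
    intros w _. pose proof (urysohn_fun_range w). lra. }
  pose proof (urysohn_fun_range z).
  (* two dyadics [a < k1/2^n1 < k2/2^n2 < urysohn_fun z]; the complement of the
     closure of the first set is a neighbourhood of [z] on which the function stays above [a] *)
  destruct (dyadic_dense a (urysohn_fun z)) as [n1 [k1 [hk1 [h11 h12]]]]; try lra.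
  pose proof (dyadic_nonneg n1 k1).
  destruct (dyadic_dense (INR k1 / 2 ^ n1) (urysohn_fun z)) as [n2 [k2 [hk2 [h21 h22]]]];
    try lra.
  exists (fun w => ~ closure X (dyadic_sets n1 k1) w). split; [apply closure_closed|]. split.
  - intros hcl. assert (urysohn_fun z <= INR k2 / 2 ^ n2); [|lra].
    apply urysohn_fun_le. right. exists n2, k2.
    split; [|split]; auto. apply (dyadic_sets_closure_sub n1 k1); auto.
  - intros w hw. assert (INR k1 / 2 ^ n1 <= urysohn_fun w); [|lra].
    apply le_urysohn_fun. intros r [->|[n [k [hk [-> hU]]]]]; [lra|].
    apply Rnot_lt_le. intros hlt. apply hw. apply subset_closure.
    apply (dyadic_sets_closure_sub n k); auto. apply subset_closure; auto.
Qed.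

Lemma urysohn_fun_continuous : continuousR urysohn_fun.
Proof. apply continuousR_of_semicontinuous; [apply urysohn_fun_usc | apply urysohn_fun_lsc]. Qed.

Lemma urysohn_fun_bottom z : U0 z -> urysohn_fun z = 0.
Proof.
  intros hz. apply Rle_antisym; [|apply urysohn_fun_range].
  apply urysohn_fun_le. right. exists O, O. simpl. repeat split; auto. lra.
Qed.

Lemma urysohn_fun_top z : ~ O1 z -> urysohn_fun z = 1.
Proof.
  intros hz. apply Rle_antisym; [apply urysohn_fun_range|].
  apply le_urysohn_fun. intros r [->|[n [k [hk [-> hU]]]]]; [lra|].
  exfalso. apply hz, (dyadic_sets_top n).
  destruct (Compare_dec.le_lt_eq_dec _ _ hk) as [hlt| <-]; auto.
  apply (nested_closure_sub _ n (nested_dyadic_sets n) k); auto. apply subset_closure; auto.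
Qed.

End Urysohn.

Lemma urysohn (X : TopSpace) (hc : compact_space X) (hh : hausdorff_space X)
  (F O : X -> Prop) (hF : closed X F) (hO : opens X O) (hFO : forall z, F z -> O z) :
  exists phi : C X, (forall z, F z -> ev phi z = 0) /\ (forall z, ~ O z -> ev phi z = 1) /\
    (forall z, 0 <= ev phi z <= 1).
Proof.
  destruct (closed_shrink X hc hh F O hF hO hFO) as [U0 [hU0 [hFU0 hcl]]].
  exists (exist _ _ (urysohn_fun_continuous X hc hh U0 O hU0 hO hcl)). unfold ev; simpl.
  split; [|split].
  - intros z hz. apply urysohn_fun_bottom; auto.
  - apply urysohn_fun_top; auto.
  - apply urysohn_fun_range.
Qed.

(** * Functionals in OH *)

Lemma normed_of_in_V (X : TopSpace) (nu : C X -> R) : in_V nu -> normed nu.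
Proof.
  intros hV one h1. apply Rle_antisym; [apply (proj2 (hV one)) | apply (proj1 (hV one))];
    intros x; rewrite h1; lra.
Qed.

Lemma isOH_intro (X : TopSpace) (nu : C X -> R) :
  in_V nu -> weakly_additive nu -> order_preserving nu -> pos_homogeneous nu -> isOH nu.
Proof. intros hV hw ho hh. split; [|split; [apply normed_of_in_V|]]; auto. Qed.

Lemma isOH_ext (X : TopSpace) (nu nu' : C X -> R) :
  (forall phi, nu phi = nu' phi) -> isOH nu -> isOH nu'.
Proof. intros h. replace nu' with nu; auto. apply functional_extensionality; auto. Qed.

Lemma OH_ext (X : TopSpace) (nu : C X -> R) (phi psi : C X) :
  isOH nu -> (forall x, ev phi x = ev psi x) -> nu phi = nu psi.
Proof.
  intros [_ [_ [_ [ho _]]]] h. apply Rle_antisym; apply ho; intros x; rewrite h; lra.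
Qed.

Lemma OH_aff (X : TopSpace) (nu : C X -> R) (a b : R) (phi : C X) :
  isOH nu -> 0 <= b -> nu (aff X a b phi) = a + b * nu phi.
Proof.
  intros [_ [_ [hw [_ hh]]]] hb.
  rewrite (hw (aff X 0 b phi) (aff X a b phi) a), (hh phi (aff X 0 b phi) b hb).
  - ring.
  - intros x; simpl; ring.
  - intros x; simpl; ring.
Qed.

Lemma OH_eq (X : TopSpace) (a b : OH X) :
  (forall phi, proj1_sig a phi = proj1_sig b phi) -> a = b.
Proof.
  intros h. destruct a as [a ha], b as [b hb]. simpl in h.
  assert (a = b) by (apply functional_extensionality; auto). subst b.
  f_equal. apply proof_irrelevance.
Qed.

Lemma isOH_dirac (X : TopSpace) (x : X) : isOH (fun phi : C X => ev phi x).
Proof.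
  apply isOH_intro.
  - intros phi; split; [intros m hm | intros M hM]; auto.
  - intros phi psi c h; apply h.
  - intros phi psi h; apply h.
  - intros phi psi t _ h; apply h.
Qed.

Definition dirac (X : TopSpace) (x : X) : OH X := exist _ _ (isOH_dirac X x).

Lemma OH_open_gt (X : TopSpace) (phi : C X) (a : R) :
  OH_open (fun nu : OH X => a < proj1_sig nu phi).
Proof.
  intros nu hnu. exists (phi :: nil), (proj1_sig nu phi - a). split; [lra|].
  intros mu hmu. specialize (hmu phi (or_introl eq_refl)). apply Rabs_def2 in hmu. lra.
Qed.

Lemma isOH_combine (X : TopSpace) (g : R -> R -> R)
  (g_lb : forall m a b, m <= a -> m <= b -> m <= g a b)
  (g_ub : forall M a b, a <= M -> b <= M -> g a b <= M)
  (g_shift : forall a b c, g (a + c) (b + c) = g a b + c)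
  (g_scale : forall t a b, 0 <= t -> g (t * a) (t * b) = t * g a b)
  (g_mono : forall a b a' b', a <= a' -> b <= b' -> g a b <= g a' b')
  (nu1 nu2 : C X -> R) : isOH nu1 -> isOH nu2 -> isOH (fun phi => g (nu1 phi) (nu2 phi)).
Proof.
  intros [V1 [_ [w1 [o1 h1]]]] [V2 [_ [w2 [o2 h2]]]]. apply isOH_intro.
  - intros phi; split.
    + intros m hm. apply g_lb; [apply (proj1 (V1 phi)) | apply (proj1 (V2 phi))]; auto.
    + intros M hM. apply g_ub; [apply (proj2 (V1 phi)) | apply (proj2 (V2 phi))]; auto.
  - intros phi psi c h. rewrite (w1 phi psi c h), (w2 phi psi c h). apply g_shift.
  - intros phi psi h. apply g_mono; auto.
  - intros phi psi t ht h. rewrite (h1 phi psi t ht h), (h2 phi psi t ht h). apply g_scale; auto.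
Qed.

Lemma isOH_Rmax (X : TopSpace) (nu1 nu2 : C X -> R) :
  isOH nu1 -> isOH nu2 -> isOH (fun phi => Rmax (nu1 phi) (nu2 phi)).
Proof.
  apply isOH_combine; intros; unfold Rmax; repeat destruct Rle_dec; nra.
Qed.

Lemma isOH_Rmin (X : TopSpace) (nu1 nu2 : C X -> R) :
  isOH nu1 -> isOH nu2 -> isOH (fun phi => Rmin (nu1 phi) (nu2 phi)).
Proof.
  apply isOH_combine; intros; unfold Rmin; repeat destruct Rle_dec; nra.
Qed.

Lemma isOH_dual (X : TopSpace) (nu : C X -> R) :
  isOH nu -> isOH (fun phi => - nu (aff X 0 (-1) phi)).
Proof.
  intros [hV [_ [hw [ho hh]]]]. apply isOH_intro.
  - intros phi; split.
    + intros m hm. enough (nu (aff X 0 (-1) phi) <= - m) by lra.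
      apply (proj2 (hV _)). intros x; simpl. specialize (hm x). lra.
    + intros M hM. enough (- M <= nu (aff X 0 (-1) phi)) by lra.
      apply (proj1 (hV _)). intros x; simpl. specialize (hM x). lra.
  - intros phi psi c h. rewrite (hw (aff X 0 (-1) phi) (aff X 0 (-1) psi) (- c)); [ring|].
    intros x; simpl; rewrite h; ring.
  - intros phi psi h. enough (nu (aff X 0 (-1) psi) <= nu (aff X 0 (-1) phi)) by lra.
    apply ho. intros x; simpl. specialize (h x). lra.
  - intros phi psi t ht h. rewrite (hh (aff X 0 (-1) phi) (aff X 0 (-1) psi) t ht); [ring|].
    intros x; simpl; rewrite h; ring.
Qed.

Lemma isOH_comp (X Y : TopSpace) (T : C X -> C Y) (mu : C Y -> R) :
  (forall y, isOH (fun phi => ev (T phi) y)) -> isOH mu -> isOH (fun phi => mu (T phi)).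
Proof.
  intros hT [hV [_ [hw [ho hh]]]]. apply isOH_intro.
  - intros phi; split.
    + intros m hm. apply (proj1 (hV _)). intros y. apply (proj1 (proj1 (hT y) phi)); auto.
    + intros M hM. apply (proj2 (hV _)). intros y. apply (proj2 (proj1 (hT y) phi)); auto.
  - intros phi psi c h. apply hw. intros y. apply (proj1 (proj2 (proj2 (hT y)))); auto.
  - intros phi psi h. apply ho. intros y. apply (proj1 (proj2 (proj2 (proj2 (hT y))))); auto.
  - intros phi psi t ht h. apply hh; auto. intros y.
    apply (proj2 (proj2 (proj2 (proj2 (hT y))))); auto.
Qed.

(** * Openness of OH(f) implies openness of f *)

Section OpenMapOfOHOpen.
Variables (X Y : TopSpace) (hXc : compact_space X) (hXh : hausdorff_space X)
  (hYc : compact_space Y) (hYh : hausdorff_space Y) (f : X -> Y) (hf : continuous f).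

(* [phi] is dominated by [a + (1 - a) psi o f] for an Urysohn function [psi] vanishing
   at [y] and equal to 1 on [f {a <= phi}]. *)
Lemma OH_le_off_image (nu : OH X) (y : Y) (phi : C X) (a : R) :
  OHmap hf nu = dirac Y y -> (forall x, ev phi x <= 1) -> a <= 1 ->
  ~ image f (fun x => a <= ev phi x) y -> proj1_sig nu phi <= a.
Proof.
  intros hnu hphi ha hy.
  set (K := fun x => a <= ev phi x).
  destruct (urysohn Y hYc hYh (fun w => w = y) (fun w => ~ image f K w)
    (singleton_closed Y hYh y) (closed_image X Y hXc hYh f hf K (closed_ge X phi a)))
    as [psi [hpy [hpK hpb]]].
  { intros w ->; auto. }
  assert (hpsi : proj1_sig nu (compC hf psi) = 0).
  { rewrite <- (hpy y eq_refl).
    change (proj1_sig (OHmap hf nu) psi = proj1_sig (dirac Y y) psi). rewrite hnu; auto. }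
  assert (hle : proj1_sig nu phi <= proj1_sig nu (aff X a (1 - a) (compC hf psi))).
  { destruct (proj2_sig nu) as [_ [_ [_ [ho _]]]]. apply ho. intros x; simpl.
    pose proof (hpb (f x)). destruct (classic (K x)) as [hx|hx].
    - rewrite hpK; [specialize (hphi x); lra|]. intros hn; apply hn; exists x; auto.
    - unfold K in hx. nra. }
  rewrite OH_aff, hpsi in hle; [lra | apply (proj2_sig nu) | lra].
Qed.

Lemma open_map_of_OH_open_map : OH_open_map (OHmap hf) -> open_map f.
Proof.
  intros hO U hU. apply open_locally. intros y [x [hxU <-]].
  destruct (urysohn X hXc hXh (fun z => z = x) U (singleton_closed X hXh x) hU)
    as [psi0 [h0x [h0U h0b]]].
  { intros z ->; auto. }
  set (phi0 := aff X 1 (-1) psi0).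
  destruct (hO _ (OH_open_gt X phi0 (1/2)) (dirac Y (f x))) as [l [e [he hN]]].
  { exists (dirac X x). split.
    - simpl. rewrite h0x; auto. lra.
    - apply OH_eq. intros psi. reflexivity. }
  exists (fun y' => forall psi, In psi l -> Rabs (ev psi y' - ev psi (f x)) < e).
  split; [|split].
  - apply open_finite_inter. intros psi _. apply open_dist_lt.
  - intros psi _. unfold Rminus. rewrite Rplus_opp_r, Rabs_R0; auto.
  - intros y' hy'.
    destruct (hN (dirac Y y') hy') as [nu [hnu hnuy]].
    destruct (classic (image f (fun z => 1/4 <= ev phi0 z) y')) as [[z [hz <-]]|hn].
    + exists z; split; auto. apply NNPP; intros hnz. simpl in hz. rewrite h0U in hz; auto; lra.
    + assert (hphi0 : forall z, ev phi0 z <= 1) by (intros z; simpl; specialize (h0b z); lra).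
      pose proof (OH_le_off_image nu y' phi0 (1/4) hnuy hphi0 ltac:(lra) hn). lra.
Qed.

End OpenMapOfOHOpen.

(** * Openness of f implies openness of OH(f) *)

Section FiberSup.
Variables (X Y : TopSpace) (hXc : compact_space X) (f : X -> Y)
  (hsurj : forall y : Y, exists x : X, f x = y).

Definition fiber_values (phi : C X) (y : Y) (r : R) : Prop := exists x, f x = y /\ r = ev phi x.

Lemma fiber_values_bound (phi : C X) (y : Y) : bound (fiber_values phi y).
Proof.
  destruct (bounded X hXc phi) as [M hM]. exists M. intros r [x [_ ->]].
  specialize (hM x). pose proof (Rle_abs (ev phi x)); lra.
Qed.

Lemma fiber_values_inhabited (phi : C X) (y : Y) : exists r, fiber_values phi y r.
Proof. destruct (hsurj y) as [x hx]. exists (ev phi x), x; auto. Qed.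

Definition fiber_sup (phi : C X) (y : Y) : R :=
  proj1_sig (completeness _ (fiber_values_bound phi y) (fiber_values_inhabited phi y)).

Lemma fiber_sup_lub (phi : C X) (y : Y) : is_lub (fiber_values phi y) (fiber_sup phi y).
Proof. unfold fiber_sup. apply proj2_sig. Qed.

Lemma le_fiber_sup (phi : C X) (x : X) : ev phi x <= fiber_sup phi (f x).
Proof. apply fiber_sup_lub. exists x; auto. Qed.

Lemma fiber_sup_le (phi : C X) (y : Y) (b : R) :
  (forall x, f x = y -> ev phi x <= b) -> fiber_sup phi y <= b.
Proof.
  intros h. apply fiber_sup_lub. intros r [x [hx ->]]; auto.
Qed.

Lemma isOH_fiber_sup (y : Y) : isOH (fun phi => fiber_sup phi y).
Proof.
  apply isOH_intro.
  - intros phi; split.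
    + intros m hm. destruct (hsurj y) as [x <-].
      specialize (hm x). pose proof (le_fiber_sup phi x). lra.
    + intros M hM. apply fiber_sup_le; auto.
  - intros phi psi c h. apply Rle_antisym.
    + apply fiber_sup_le. intros x <-. rewrite h. pose proof (le_fiber_sup phi x). lra.
    + enough (fiber_sup phi y <= fiber_sup psi y - c) by lra.
      apply fiber_sup_le. intros x <-. pose proof (le_fiber_sup psi x). rewrite h in H. lra.
  - intros phi psi h. apply fiber_sup_le. intros x <-.
    specialize (h x). pose proof (le_fiber_sup psi x). lra.
  - intros phi psi t ht h. destruct (Req_dec t 0) as [->|ht0].
    + rewrite Rmult_0_l. apply Rle_antisym.
      * apply fiber_sup_le. intros x _. rewrite h; lra.
      * destruct (hsurj y) as [x <-]. pose proof (le_fiber_sup psi x). rewrite h in H. lra.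
    + apply Rle_antisym.
      * apply fiber_sup_le. intros x <-. rewrite h.
        apply Rmult_le_compat_l; [lra | apply le_fiber_sup].
      * enough (fiber_sup phi y <= fiber_sup psi y / t).
        { apply (Rmult_le_compat_l t) in H; [|lra].
          replace (t * (fiber_sup psi y / t)) with (fiber_sup psi y) in H by (field; lra). lra. }
        apply fiber_sup_le. intros x <-. apply (Rmult_le_reg_l t); [lra|].
        replace (t * (fiber_sup psi (f x) / t)) with (fiber_sup psi (f x)) by (field; lra).
        rewrite <- h. apply le_fiber_sup.
Qed.

Lemma fiber_sup_comp (hf : continuous f) (psi : C Y) (y : Y) :
  fiber_sup (compC hf psi) y = ev psi y.
Proof.
  apply Rle_antisym.
  - apply fiber_sup_le. intros x <-. apply Rle_refl.
  - destruct (hsurj y) as [x <-]. apply (le_fiber_sup (compC hf psi) x).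
Qed.

(* Upper semicontinuity comes from [f] being closed, lower semicontinuity from [f] being
   open: [{a < fiber_sup phi}] is the image of [{a < phi}]. *)
Lemma fiber_sup_continuous (hYh : hausdorff_space Y) (hf : continuous f) (hopen : open_map f)
  (phi : C X) : continuousR (fiber_sup phi).
Proof.
  apply continuousR_of_semicontinuous; intros a.
  - apply open_locally. intros y0 hy0.
    set (b := (fiber_sup phi y0 + a) / 2).
    exists (fun w => ~ image f (fun x => b <= ev phi x) w).
    split; [apply (closed_image X Y hXc hYh f hf), closed_ge|]. split.
    + intros [x [hx hfx]]. pose proof (le_fiber_sup phi x).
      rewrite hfx in H. unfold b in hx. lra.
    + intros w hw. enough (fiber_sup phi w <= b) by (unfold b in *; lra).
      apply fiber_sup_le. intros x hx. apply Rnot_lt_le. intros hlt. apply hw.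
      exists x; split; auto; lra.
  - apply (opens_ext _ (image f (fun x => a < ev phi x))); [|apply hopen, open_gt].
    intros y; split.
    + intros [x [hx <-]]. pose proof (le_fiber_sup phi x). lra.
    + intros hy. apply NNPP. intros hn.
      enough (fiber_sup phi y <= a) by lra.
      apply fiber_sup_le. intros x hx. apply Rnot_lt_le. intros hlt. apply hn. exists x; auto.
Qed.

End FiberSup.

Section OHOpenOfOpenMap.
Variables (X Y : TopSpace) (hXc : compact_space X) (hYh : hausdorff_space Y)
  (f : X -> Y) (hf : continuous f) (hsurj : forall y : Y, exists x : X, f x = y)
  (hopen : open_map f).

Definition lift_sup (phi : C X) : C Y :=
  exist _ (fiber_sup X Y hXc f hsurj phi) (fiber_sup_continuous X Y hXc f hsurj hYh hf hopen phi).

Definition lift_inf (phi : C X) : C Y := aff Y 0 (-1) (lift_sup (aff X 0 (-1) phi)).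

Lemma le_lift_sup (phi : C X) (x : X) : ev phi x <= ev (lift_sup phi) (f x).
Proof. apply le_fiber_sup. Qed.

Lemma lift_inf_le (phi : C X) (x : X) : ev (lift_inf phi) (f x) <= ev phi x.
Proof.
  simpl. pose proof (le_fiber_sup X Y hXc f hsurj (aff X 0 (-1) phi) x). simpl in H. lra.
Qed.

Lemma lift_sup_comp (psi : C Y) (y : Y) : ev (lift_sup (compC hf psi)) y = ev psi y.
Proof. apply fiber_sup_comp. Qed.

Lemma lift_inf_comp (psi : C Y) (y : Y) : ev (lift_inf (compC hf psi)) y = ev psi y.
Proof.
  apply Rle_antisym.
  - destruct (hsurj y) as [x <-]. apply (lift_inf_le (compC hf psi) x).
  - simpl. enough (fiber_sup X Y hXc f hsurj (aff X 0 (-1) (compC hf psi)) y <= - ev psi y)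
      by lra.
    apply fiber_sup_le. intros x <-. simpl. lra.
Qed.

Lemma isOH_lift_sup (y : Y) : isOH (fun phi => ev (lift_sup phi) y).
Proof. apply isOH_fiber_sup. Qed.

Lemma isOH_lift_inf (y : Y) : isOH (fun phi => ev (lift_inf phi) y).
Proof.
  refine (isOH_ext _ _ _ _ (isOH_dual X _ (isOH_lift_sup y))). intros phi; simpl; lra.
Qed.

(* The preimage of [mu] near [nu]: [nu] clamped between the two lifts measured by [mu]. *)
Definition clamped_preimage (nu : C X -> R) (mu : C Y -> R) (phi : C X) : R :=
  Rmax (mu (lift_inf phi)) (Rmin (nu phi) (mu (lift_sup phi))).

Lemma isOH_clamped_preimage (nu : C X -> R) (mu : C Y -> R) :
  isOH nu -> isOH mu -> isOH (clamped_preimage nu mu).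
Proof.
  intros hnu hmu. apply isOH_Rmax; [|apply isOH_Rmin; auto];
    apply isOH_comp; auto; [apply isOH_lift_inf | apply isOH_lift_sup].
Qed.

Lemma OHf_clamped_preimage (nu : C X -> R) (mu : C Y -> R) (psi : C Y) :
  isOH mu -> OHf_fun hf (clamped_preimage nu mu) psi = mu psi.
Proof.
  intros hmu. unfold OHf_fun, clamped_preimage.
  rewrite (OH_ext Y mu _ psi hmu (lift_inf_comp psi)),
          (OH_ext Y mu _ psi hmu (lift_sup_comp psi)).
  unfold Rmax, Rmin. repeat destruct Rle_dec; lra.
Qed.

Lemma clamped_preimage_close (nu : C X -> R) (mu : C Y -> R) (phi : C X) (e : R) :
  isOH nu ->
  Rabs (mu (lift_sup phi) - nu (compC hf (lift_sup phi))) < e ->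
  Rabs (mu (lift_inf phi) - nu (compC hf (lift_inf phi))) < e ->
  Rabs (clamped_preimage nu mu phi - nu phi) < e.
Proof.
  intros [_ [_ [_ [ho _]]]] hsup hinf.
  assert (h1 : nu phi <= nu (compC hf (lift_sup phi))) by (apply ho; apply le_lift_sup).
  assert (h2 : nu (compC hf (lift_inf phi)) <= nu phi) by (apply ho; apply lift_inf_le).
  apply Rabs_def2 in hsup, hinf. unfold clamped_preimage, Rmax, Rmin.
  repeat destruct Rle_dec; apply Rabs_def1; lra.
Qed.

Lemma OH_open_map_of_open_map : OH_open_map (OHmap hf).
Proof.
  intros U hU mu0 [nu [hnuU <-]].
  destruct (hU nu hnuU) as [l [e [he hN]]].
  exists (flat_map (fun phi => lift_sup phi :: lift_inf phi :: nil) l), e. split; auto.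
  intros mu hmu.
  exists (exist _ _ (isOH_clamped_preimage _ _ (proj2_sig nu) (proj2_sig mu))). split.
  - apply hN. intros phi hphi. apply clamped_preimage_close; [apply (proj2_sig nu)| |];
      apply hmu, in_flat_map; exists phi; simpl; auto.
  - apply OH_eq. intros psi. apply OHf_clamped_preimage, (proj2_sig mu).
Qed.

End OHOpenOfOpenMap.

Theorem proposition1 (X Y : TopSpace)
  (hXc : compact_space X) (hXh : hausdorff_space X) (hYc : compact_space Y) (hYh : hausdorff_space Y)
  (f : X -> Y) (hf : continuous f) (hsurj : forall y : Y, exists x : X, f x = y) :
  OH_open_map (OHmap hf) <-> open_map f.
Proof.
  split.
  - apply open_map_of_OH_open_map; auto.
  - intros hopen. apply (OH_open_map_of_open_map X Y hXc hYh f hf hsurj hopen).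
Qed.
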